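(* If a spherical curve $P$ has an incoherent bigon, then $r(P)\le 1$.
   Context: A spherical curve is a smooth immersion $P:S^1\to S^2$ whose self-intersections are finitely many transverse double points, called crossings. It is oriented and has at least one crossing. Regions are the components of $S^2\setminus P(S^1)$, and edges are the arcs of the curve between consecutive crossings. An $n$-gon is a region bounded by $n$ edges; a bigon is a $2$-gon. A region is coherent if its boundary edges, with the orientations induced from $P$, all run in the same rotational direction around the region; otherwise it is incoherent. In Gauss-word terms, a bigon with crossings $y,z$ is coherent iff the word has the form $y z\,W_1\,z y\,W_2$, and incoherent iff it has the form $y z\,W_1\,y z\,W_2$. The Gauss word is the cyclic word of crossings met in one traversal of the curve; each crossing appears twice. Crossings $a,b$ are interlaced if their occurrences alternate $a\dots b\dots a\dots b$. A crossing is reducible if no crossing is interlaced with it; equivalently, only three distinct regions meet at it. $P$ is reducible if it has a reducible crossing, and reduced otherwise. The inverse-half-twisted splice $I$ at a crossing $p$ takes the curve with cyclic Gauss word $p\,A\,p\,B$ to the curve with Gauss word $\overline{A}\,B$, where $\overline{A}$ is $A$ reversed. Geometrically, $p$ is smoothed in the unique way giving a single closed curve, and the result is re-oriented. The reductivity $r(P)$ is the minimal number of successive applications of $I$ needed to reach a reducible spherical curve; $r(P)=0$ if $P$ is reducible. *)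

From mathcomp Require Import all_boot all_fingroup.
Set Implicit Arguments. Unset Strict Implicit. Unset Printing Implicit Defensive.

(* A spherical curve with >= 1 crossing is (up to isotopy) its image, a   *)
(* connected 4-regular graph cellularly embedded in S^2, whose            *)
(* straight-ahead walk is a single closed curve.  We encode it by darts   *)
(* (half-edges) D, the edge involution [alpha] and the rotation [sigma]   *)
(* around each crossing (vertex).  Faces (regions) are orbits of          *)
(* [phi := sigma \o alpha].  Going straight through a crossing is sigma^2. *)

Section Curves.
Variable D : finType.
Variables alpha sigma : {perm D}.

Definition phi (d : D) : D := sigma (alpha d).
Definition tau (d : D) : D := sigma (sigma (alpha d)). (* straight-ahead successor *)

Definition adj_rel : rel D := [rel x y | (y == alpha x) || (y == sigma x)].

Definition spherical_curve : Prop :=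
  [/\ (forall d, alpha (alpha d) = d /\ alpha d != d),
      (forall d, fingraph.order sigma d = 4),
      (forall d e, connect adj_rel d e),
      fcard sigma D + fcard phi D = fcard alpha D + 2     (* genus 0: V - E + F = 2 *)
    & fcard tau D = 2].                                   (* one component (two directions) *)

Definition crossing (d : D) : D := froot sigma d.

(* The orientation of P is given by a dart d0: the positively oriented    *)
(* (outgoing) darts are those in the tau-orbit of d0.                     *)
Definition forward (d0 d : D) : bool := fconnect tau d0 d.

(* A bigon: a region bounded by 2 edges.  It is incoherent iff its        *)
(* boundary edges do not all run in the same direction around it, i.e.    *)
(* the face-darts are not all forward nor all backward.                   *)
Definition incoherent_bigon (d0 d : D) : bool :=
  (fingraph.order phi d == 2) && (forward d0 d != forward d0 (phi d)).

Definition has_incoherent_bigon (d0 : D) : Prop :=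
  exists d, incoherent_bigon d0 d.

Definition gauss_word (d0 : D) : seq D :=
  [seq crossing (iter k tau d0) | k <- iota 0 (fingraph.order tau d0)].

End Curves.

(* Gauss-word combinatorics (words are cyclic; the definitions below are  *)
(* invariant under rotation for words in which each letter occurs twice). *)
Section Words.
Variable T : eqType.

(* letters strictly between the two occurrences of a *)
Definition between (w : seq T) (a : T) : seq T :=
  let r := drop (index a w).+1 w in take (index a r) r.

Definition interlaced (w : seq T) (a b : T) : bool :=
  (a != b) && (count_mem b (between w a) == 1).

Definition reducible_crossing (w : seq T) (p : T) : bool :=
  (p \in w) && ~~ has (interlaced w p) w.

Definition reducible (w : seq T) : bool := has (reducible_crossing w) w.

(* inverse-half-twisted splice: p A p B  |->  rev A ++ B *)
Definition splice (w : seq T) (p : T) : seq T :=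
  let c := drop (index p w).+1 w ++ take (index p w) w in   (* w = p c cyclically *)
  let A := take (index p c) c in
  let B := drop (index p c).+1 c in
  rev A ++ B.

(* reducible_within k w  <->  r(w) <= k : some sequence of at most k       *)
(* splices reaches a reducible curve.                                     *)
Fixpoint reducible_within (k : nat) (w : seq T) : bool :=
  reducible w ||
  (if k is k'.+1 then has (fun p => reducible_within k' (splice w p)) w else false).

End Words.

From Pilot Require Import Defs.
From mathcomp Require Import all_boot all_fingroup.
From mathcomp Require Import zify.
Set Implicit Arguments. Unset Strict Implicit. Unset Printing Implicit Defensive.

(* The two edges of an incoherent bigon with corners p, q are traversed    *)
(* in the same direction, so the Gauss word reads, cyclically,             *)
(* p q W1 p q W2.  Splicing at p turns  q W1  into  W1^-1 q,  which is now *)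
(* followed by  q W2: the two occurrences of q become adjacent, so q is a  *)
(* reducible crossing and r(P) <= 1.                                       *)

Section GaussWords.
Variable T : eqType.

Lemma reducible_doubled_letter (w1 w3 : seq T) (b : T) :
  b \notin w1 -> reducible (w1 ++ b :: b :: w3).
Proof.
move=> bw1; apply/hasP; exists b; first by rewrite mem_cat inE eqxx orbT.
rewrite /reducible_crossing mem_cat inE eqxx orbT /=.
apply/hasPn=> c _; rewrite /interlaced /between index_cat (negbTE bw1) /= eqxx.
by rewrite addn0 -cat_rcons drop_size_cat ?size_rcons //= eqxx andbF.
Qed.

Lemma twice_notin_rest (w1 w2 w3 : seq T) (a : T) :
  count_mem a (w1 ++ a :: w2 ++ a :: w3) <= 2 ->
  [/\ a \notin w1, a \notin w2 & a \notin w3].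
Proof.
rewrite !count_cat /= eqxx count_cat /= eqxx => Ha.
by split; apply/count_memPn; lia.
Qed.

Lemma splice_cat (w1 w2 w3 : seq T) (a : T) : a \notin w1 -> a \notin w2 ->
  splice (w1 ++ a :: w2 ++ a :: w3) a = rev w2 ++ w3 ++ w1.
Proof.
move=> aw1 aw2.
have first_a (x y : seq T) : a \notin x -> index a (x ++ a :: y) = size x.
  by move=> ax; rewrite index_cat (negbTE ax) /= eqxx addn0.
have after_a (x y : seq T) : drop (size x).+1 (x ++ a :: y) = y.
  by rewrite -cat_rcons drop_size_cat ?size_rcons.
rewrite /splice first_a // after_a [take (size w1) _]take_size_cat //.
have -> : (w2 ++ a :: w3) ++ w1 = w2 ++ a :: (w3 ++ w1) by rewrite -catA.
by rewrite first_a // take_size_cat // after_a.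
Qed.

(* The Gauss-word form of an incoherent bigon: the cyclic word is          *)
(* a b W1 a b W2, i.e. both occurrences of a are (cyclically) followed by  *)
(* b, where a default successor a means that the two a's are adjacent.     *)
(* Then r <= 1: either a a is a reducible factor, or splicing at a         *)
(* reverses  b W1  into  W1^-1 b  which is followed by  b W2.              *)
Lemma incoherent_word_reducible_within1 (w1 w2 w3 : seq T) (a b : T) :
  count_mem a (w1 ++ a :: w2 ++ a :: w3) <= 2 ->
  count_mem b (w1 ++ a :: w2 ++ a :: w3) <= 2 ->
  head a w2 = b -> head a (w3 ++ w1) = b ->
  reducible_within 1 (w1 ++ a :: w2 ++ a :: w3).
Proof.
move=> /twice_notin_rest[aw1 aw2 _] Cb.
case: w2 aw2 Cb => [|c u] /= aw2 Cb Eb.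
  by move=> _; apply/orP; left; apply: reducible_doubled_letter.
subst c; case Ew: (w3 ++ w1) => [|c v] /= Ec.
  by move: aw2; rewrite Ec inE eqxx.
subst c; have bu : b \notin u.
  apply/count_memPn; move: Cb (congr1 (count_mem b) Ew).
  by rewrite !count_cat /= !count_cat /= eqxx; lia.
apply/orP; right; apply/hasP; exists a; first by rewrite mem_cat inE eqxx orbT.
rewrite orbF (@splice_cat w1 (b :: u)) // Ew rev_cons cat_rcons.
by apply: reducible_doubled_letter; rewrite mem_rev.
Qed.

End GaussWords.

Lemma head_map_traject (T U : Type) (g : T -> U) (f : T -> T) (y : T) (m : nat) :
  head (g (iter m f y)) (map g (traject f y m)) = g y.
Proof. by case: m. Qed.

Lemma traject_iota (T : Type) (f : T -> T) (x : T) (n : nat) :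
  traject f x n = [seq iter k f x | k <- iota 0 n].
Proof.
elim: n x => //= n IHn x; rewrite IHn -[1]/(1 + 0) iotaDl -map_comp.
by congr (_ :: _); apply: eq_map => k /=; rewrite -iterSr iterS.
Qed.

Section StraightAheadWalk.
Variable D : finType.
Variables alpha sigma : {perm D}.
Hypothesis alpha_invol : forall d, alpha (alpha d) = d.
Hypothesis alpha_fixfree : forall d, alpha d != d.
Hypothesis sigma_order4 : forall d, fingraph.order sigma d = 4.
Hypothesis two_tau_orbits : fcard (tau alpha sigma) D = 2.

Local Notation t := (tau alpha sigma).
Local Notation forward := (forward alpha sigma).
Local Notation crossing := (crossing sigma).

Lemma tau_inj : injective t.
Proof. by move=> x y /perm_inj/perm_inj/perm_inj. Qed.

Lemma fconnect_tau_sym : connect_sym (frel t).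
Proof. exact: fconnect_sym tau_inj. Qed.

Lemma sigma4 d : sigma (sigma (sigma (sigma d))) = d.
Proof. by have := iter_order (@perm_inj _ sigma) d; rewrite sigma_order4. Qed.

Lemma iter_sigma_neq k d : 0 < k < 4 -> iter k sigma d != d.
Proof.
case/andP=> k_gt0 k_lt4; apply/eqP=> Ed.
have := @findex_iter _ sigma d k; rewrite sigma_order4 Ed findex0 => /(_ k_lt4).
by move=> k0; rewrite -k0 in k_gt0.
Qed.

(* conjugating by alpha reverses the straight-ahead walk.                 *)
Lemma tau_alpha_tau y : t (alpha (t y)) = alpha y.
Proof. by rewrite /tau alpha_invol sigma4. Qed.

Lemma alpha_iter_tau x k j : iter k t x = alpha x -> j <= k ->
  alpha (iter j t x) = iter (k - j) t x.
Proof.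
move=> Ek; elim: j => [|j IHj] j_le_k; first by rewrite subn0 Ek.
apply: tau_inj; rewrite iterS tau_alpha_tau -iterS -subSn //.
by rewrite subSS -IHj ?alpha_invol // ltnW.
Qed.

(* The two directions of an edge lie on different straight-ahead orbits:  *)
(* otherwise the midpoint of the walk from x to alpha x would be an edge  *)
(* fixed by alpha, or a dart fixed by sigma^2.                            *)
Lemma alpha_not_fconnect x : ~~ fconnect t x (alpha x).
Proof.
apply/negP=> /iter_findex; set k := findex _ _ _ => Ek.
have Ek2 : k = k./2 + k./2 + odd k by rewrite addnn addnC odd_double_half.
have half_le : k./2 <= k by lia.
have := alpha_iter_tau Ek half_le; have -> : k - k./2 = k./2 + odd k by lia.
set u := iter k./2 t x; case: (odd k) => /=.
- rewrite addn1 iterS -/u => Eu.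
  by have := @iter_sigma_neq 2 (alpha u) isT; rewrite /= {2}Eu eqxx.
- by rewrite addn0 -/u => Eu; have := alpha_fixfree u; rewrite Eu eqxx.
Qed.

(* As there are exactly two straight-ahead orbits, every edge has exactly *)
(* one forward direction.                                                 *)
Lemma forward_or_alpha d0 x : forward d0 x || forward d0 (alpha x).
Proof.
apply/negPn/negP; rewrite negb_or => /andP[N1 N2].
have N3 := alpha_not_fconnect x.
pose r0 := froot t d0; pose r1 := froot t x; pose r2 := froot t (alpha x).
have U : uniq [:: r0; r1; r2].
  by rewrite /= !inE !(root_connect fconnect_tau_sym) negb_or N1 N2 N3.
have : 3 <= fcard t D; last by rewrite two_tau_orbits.
rewrite -[3]/(size [:: r0; r1; r2]) -(card_uniqP U) /n_comp_mem.
apply: subset_leq_card; apply/subsetP=> y; rewrite !inE.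
by case/or3P=> /eqP->; rewrite /= (roots_root fconnect_tau_sym).
Qed.

Lemma forward_alpha d0 x : forward d0 (alpha x) = ~~ forward d0 x.
Proof.
have := forward_or_alpha d0 x; rewrite /Defs.forward.
case Fx: (fconnect t d0 x) => //= _; apply/negbTE/negP=> Fax.
by have := alpha_not_fconnect x; rewrite -(same_connect fconnect_tau_sym Fx) Fax.
Qed.

(* Going straight through a crossing keeps the direction of travel, so    *)
(* opposite darts at a crossing have opposite directions.                 *)
Lemma forward_sigma2 d0 x : forward d0 (sigma (sigma x)) = ~~ forward d0 x.
Proof.
rewrite -forward_alpha /Defs.forward; apply: (same_connect_r fconnect_tau_sym).
by rewrite fconnect_tau_sym -(alpha_invol x) -{2}(alpha_invol (alpha x)) fconnect1.
Qed.

Lemma crossing_sigma y : crossing (sigma y) = crossing y.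
Proof.
apply/eqP; rewrite /Defs.crossing (root_connect (fconnect_sym (@perm_inj _ sigma))).
by rewrite (fconnect_sym (@perm_inj _ sigma)) fconnect1.
Qed.

Lemma gauss_word_orbit d0 :
  gauss_word alpha sigma d0 = map crossing (fingraph.orbit t d0).
Proof. by rewrite /gauss_word /fingraph.orbit traject_iota -map_comp. Qed.

(* Each crossing is passed at most twice: of its four darts  a, sigma a,   *)
(* sigma^2 a, sigma^3 a, exactly one of each opposite pair is forward.     *)
Lemma count_gauss_word_le2 d0 p : count_mem p (gauss_word alpha sigma d0) <= 2.
Proof.
rewrite gauss_word_orbit count_map -size_filter.
pose fwd_of y := if forward d0 y then y else sigma (sigma y).
rewrite -[2]/(size [:: fwd_of p; fwd_of (sigma p)]); apply: uniq_leq_size.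
  by rewrite filter_uniq // fingraph.orbit_uniq.
move=> y; rewrite mem_filter /= -fconnect_orbit => /andP[/eqP Cy Fy].
change (is_true (forward d0 y)) in Fy.
have p_y : fconnect sigma p y.
  by rewrite -Cy (fconnect_sym (@perm_inj _ sigma)); apply: connect_root.
have := iter_findex p_y; have := findex_max p_y; rewrite sigma_order4.
case: (findex sigma p y) => [|[|[|[|k]]]] //= _ Ey; subst y;
  rewrite !inE /fwd_of ?sigma4.
- by rewrite Fy eqxx.
- by rewrite Fy eqxx orbT.
- by rewrite forward_sigma2 in Fy; rewrite (negbTE Fy) eqxx.
- by rewrite forward_sigma2 in Fy; rewrite (negbTE Fy) eqxx orbT.
Qed.

(* Two forward darts at the same crossing whose straight-ahead successors *)
(* also share a crossing give the incoherent-bigon pattern  a b .. a b ..  *)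
(* in the Gauss word.                                                     *)
Lemma repeated_step_reducible_within1 d0 x x' :
  forward d0 x -> forward d0 x' -> x != x' ->
  crossing x = crossing x' -> crossing (t x) = crossing (t x') ->
  reducible_within 1 (gauss_word alpha sigma d0).
Proof.
wlog ij : x x' / findex t d0 x < findex t d0 x'.
  move=> W Fx Fx' Nx Ec Et; have : findex t d0 x != findex t d0 x'.
    by apply: contra Nx => /eqP E; rewrite -(iter_findex Fx) -(iter_findex Fx') E.
  by rewrite neq_ltn => /orP[] ?; [apply: (W x x') | apply: (W x' x)];
    rewrite // eq_sym.
move=> Fx Fx' _ Ec Et; set n := fingraph.order t d0.
set i := findex t d0 x in ij; set j := findex t d0 x' in ij.
have jn : j < n by apply: findex_max.
have ix : iter i t d0 = x by apply: iter_findex.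
have jx : iter j t d0 = x' by apply: iter_findex.
(* Cut the orbit at x and x'; the last arc wraps around through d0 to x. *)
have reach_x' : iter (j - i.+1) t (t x) = x'.
  by rewrite -ix -iterS -iterD subnK.
have back_to_d0 : iter (n - j.+1) t (t x') = d0.
  by rewrite -jx -iterS -iterD subnK // iter_order //; exact: tau_inj.
have wrap_to_x : iter (n - j.+1 + i) t (t x') = x by rewrite addnC iterD back_to_d0.
have Eorb : fingraph.orbit t d0 = traject t d0 i ++
    x :: traject t (t x) (j - i.+1) ++ x' :: traject t (t x') (n - j.+1).
  rewrite /fingraph.orbit -/n {1}(_ : n = i + (j - i.+1 + (n - j.+1).+1).+1); last lia.
  by rewrite trajectD ix trajectS trajectD reach_x' trajectS.
have Ca := count_gauss_word_le2 d0 (crossing x').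
have Cb := count_gauss_word_le2 d0 (crossing (t x)).
rewrite gauss_word_orbit Eorb map_cat /= map_cat /= Ec in Ca Cb *.
apply: (incoherent_word_reducible_within1 Ca Cb).
  by rewrite -{1}reach_x' head_map_traject.
by rewrite Et -map_cat -back_to_d0 -trajectD -Ec -wrap_to_x head_map_traject.
Qed.

(* An incoherent bigon  d, phi d  yields two distinct forward darts at one *)
(* corner of the bigon whose straight-ahead successors both reach its     *)
(* other corner.                                                          *)
Lemma incoherent_bigon_reducible_within1 d0 d :
  incoherent_bigon alpha sigma d0 d -> reducible_within 1 (gauss_word alpha sigma d0).
Proof.
case/andP=> /eqP phi2 Hf.
have phi_inj : injective (phi alpha sigma) by move=> u v /perm_inj/perm_inj.
have bigon : sigma (alpha (sigma (alpha d))) = d.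
  by have := iter_order phi_inj d; rewrite phi2.
have Ed : crossing (alpha (sigma (alpha d))) = crossing d.
  by rewrite -{2}bigon crossing_sigma.
have tau_alpha y : t (alpha y) = sigma (sigma y) by rewrite /tau alpha_invol.
have Fphi : forward d0 (sigma (alpha d)) = ~~ forward d0 d.
  by move: Hf; rewrite /phi; case: (forward d0 d); case: (forward d0 _).
case Fd: (forward d0 d) in Fphi.
- apply: (@repeated_step_reducible_within1 d0 d (alpha (sigma (alpha d)))) => //.
  + by rewrite forward_alpha Fphi.
  + by apply: contraNneq (@iter_sigma_neq 1 d isT) => E; rewrite /= {1}E bigon.
  + by rewrite tau_alpha /tau !crossing_sigma.
- apply: (@repeated_step_reducible_within1 d0 (alpha d) (sigma (alpha d))) => //.
  + by rewrite forward_alpha Fd.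
  + by rewrite eq_sym (@iter_sigma_neq 1 (alpha d)).
  + by rewrite crossing_sigma.
  + by rewrite tau_alpha /tau !crossing_sigma Ed.
Qed.

End StraightAheadWalk.

Theorem mainTheorem2 (D : finType) (alpha sigma : {perm D}) (d0 : D) :
  spherical_curve alpha sigma ->
  has_incoherent_bigon alpha sigma d0 ->
  reducible_within 1 (gauss_word alpha sigma d0).
Proof.
case=> edges crossings4 _ _ one_component [d bigon].
apply: (incoherent_bigon_reducible_within1 _ _ crossings4 one_component bigon).
- by move=> e; case: (edges e).
- by move=> e; case: (edges e).
Qed.
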